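(* Let $R$ be a commutative Noetherian ring with unity such that $\Gamma_E(R)$ has more than three vertices. Then no associated prime of $R$ is a leaf of $\Gamma_E(R)$; that is, if $y\in R$ and $\operatorname{ann}(y)$ is a prime ideal, then $\deg[y]\neq 1$.
   Context: For $x,y\in R$ write $x\sim y$ iff $\operatorname{ann}(x)=\operatorname{ann}(y)$; $[x]$ denotes the equivalence class of $x$. Let $Z^*(R)$ be the set of nonzero zero divisors of $R$. The graph $\Gamma_E(R)$ is the simple graph whose vertices are the classes $[x]$ with $x\in Z^*(R)$, two distinct vertices $[x],[y]$ being adjacent iff $xy=0$. An associated prime $\operatorname{ann}(y)$ is identified with the vertex $[y]$. A leaf is a vertex of degree $1$. *)

From mathcomp Require Import all_boot all_order all_algebra.
Set Implicit Arguments. Unset Strict Implicit. Unset Printing Implicit Defensive.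
Import GRing.Theory.
Local Open Scope ring_scope.

Definition is_ideal (R : comPzRingType) (I : R -> Prop) : Prop :=
  I 0 /\ (forall x y, I x -> I y -> I (x - y)) /\ (forall a x, I x -> I (a * x)).

Definition noetherian (R : comPzRingType) : Prop :=
  forall I : nat -> R -> Prop,
    (forall n, is_ideal (I n)) ->
    (forall n x, I n x -> I n.+1 x) ->
    exists N : nat, forall n x, (N <= n)%N -> I n x -> I N x.

Definition prime_ideal (R : comPzRingType) (P : R -> Prop) : Prop :=
  is_ideal P /\ ~ P 1 /\ (forall a b, P (a * b) -> P a \/ P b).

Definition ann (R : comPzRingType) (y : R) : R -> Prop := fun a => a * y = 0.

Definition ann_equiv (R : comPzRingType) (x y : R) : Prop :=
  forall a : R, ann x a <-> ann y a.

Definition nz_zero_divisor (R : comPzRingType) (x : R) : Prop :=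
  x != 0 /\ exists z : R, z != 0 /\ x * z = 0.

(* Gamma_E(R) has more than three vertices: there are four nonzero zero
   divisors with pairwise distinct annihilator classes. *)
Definition GammaE_more_than_three_vertices (R : comPzRingType) : Prop :=
  exists x1 x2 x3 x4 : R,
    [/\ nz_zero_divisor x1, nz_zero_divisor x2, nz_zero_divisor x3
      & nz_zero_divisor x4] /\
    (~ ann_equiv x1 x2 /\ ~ ann_equiv x1 x3 /\ ~ ann_equiv x1 x4 /\
     ~ ann_equiv x2 x3 /\ ~ ann_equiv x2 x4 /\ ~ ann_equiv x3 x4).

(* Neighbours of [y] in Gamma_E(R): vertices [x] (x in Z^*(R)), [x] <> [y],
   with x y = 0 (well defined on classes). *)
Definition GammaE_adj (R : comPzRingType) (x y : R) : Prop :=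
  nz_zero_divisor x /\ ~ ann_equiv x y /\ x * y = 0.

(* [y] is a leaf: it has exactly one neighbouring vertex (class). *)
Definition GammaE_leaf (R : comPzRingType) (y : R) : Prop :=
  exists x : R, GammaE_adj x y /\ forall z : R, GammaE_adj z y -> ann_equiv z x.

From mathcomp Require Import all_boot all_order all_algebra.
From Stdlib Require Import Classical.
Set Implicit Arguments. Unset Strict Implicit. Unset Printing Implicit Defensive.
Import GRing.Theory.
Local Open Scope ring_scope.

(* Suppose ann(y) is prime and [y] is a leaf with unique neighbour [x].  A
   nonzero a with ay = 0 is then in [y] or [x].  If z is a zero divisor with
   zy <> 0, primality gives ann(z) <= ann(y), so the nonzero elements of ann(z)
   all lie in [x]; conversely [x] <= ann(z), because a nonzero annihilator of z
   lies in [x] (it cannot lie in [y], as zy <> 0).  Hence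
   ann(z) = {0} u ([x] n ann(y)) for every such z, and every vertex is [y], [x]
   or this one class: at most three vertices. *)

Lemma not_four_pairwise_unrelated (T : Type) (e : T -> T -> Prop)
    (P A B C : T -> Prop) :
  (forall u, P u -> [\/ A u, B u | C u]) ->
  (forall u v, A u -> A v -> e u v) ->
  (forall u v, B u -> B v -> e u v) ->
  (forall u v, C u -> C v -> e u v) ->
  forall x1 x2 x3 x4, [/\ P x1, P x2, P x3 & P x4] ->
  ~ (~ e x1 x2 /\ ~ e x1 x3 /\ ~ e x1 x4 /\ ~ e x2 x3 /\ ~ e x2 x4 /\ ~ e x3 x4).
Proof.
move=> cover eA eB eC x1 x2 x3 x4 [/cover c1 /cover c2 /cover c3 /cover c4].
move=> [n12 [n13 [n14 [n23 [n24 n34]]]]].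
by case: c1; case: c2; case: c3; case: c4; auto.
Qed.

Lemma ann_equiv_to (R : comPzRingType) (w u v : R) :
  ann_equiv u w -> ann_equiv v w -> ann_equiv u v.
Proof. by move=> uw vw a; split=> [/uw/vw|/vw/uw]. Qed.

Section PrimeAnnihilator.

Variables (R : comPzRingType) (y : R).
Hypothesis ann_y_prime : prime_ideal (ann y).

Lemma prime_ann_neq0 : y != 0.
Proof.
case: ann_y_prime => _ [ann_y_ne1 _]; apply/eqP => y0.
by apply: ann_y_ne1; rewrite /ann y0 mulr0.
Qed.

Lemma prime_ann_mul_eq0 (a z : R) : a * z = 0 -> z * y != 0 -> a * y = 0.
Proof.
case: ann_y_prime => _ [_ ann_y_mul] az0 zy_neq0.
have : ann y (a * z) by rewrite /ann az0 mul0r.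
by case/ann_y_mul => // zy0; rewrite zy0 eqxx in zy_neq0.
Qed.

Variable x : R.
Hypothesis leaf_unique : forall z, GammaE_adj z y -> ann_equiv z x.

Lemma ann_eq0_leaf_classes (w : R) :
  w != 0 -> w * y = 0 -> ann_equiv w y \/ ann_equiv w x.
Proof.
move=> w_neq0 wy0; case: (classic (ann_equiv w y)) => [|w_not_y]; first by left.
right; apply: leaf_unique; split; last by [].
by split=> //; exists y; split=> //; exact: prime_ann_neq0.
Qed.

Lemma ann_outside_prime_ann (z : R) : nz_zero_divisor z -> z * y != 0 ->
  forall a, a * z = 0 <-> a = 0 \/ a * y = 0 /\ ann_equiv a x.
Proof.
move=> [_ [w [w_neq0 zw0]]] zy_neq0.
have not_y a : a * z = 0 -> ~ ann_equiv a y.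
  move=> az0 /(_ z) [a_to_y _]; move: zy_neq0.
  by rewrite [z * y]a_to_y ?eqxx // /ann mulrC.
have zx0 : z * x = 0.
  have wy0 : w * y = 0 by apply: prime_ann_mul_eq0 zy_neq0; rewrite mulrC.
  case: (ann_eq0_leaf_classes w_neq0 wy0) => [w_y | w_x]; last exact: (w_x z).1.
  by case: (not_y w); rewrite // mulrC.
move=> a; split=> [az0|[->|[_ a_x]]]; last 2 first.
- by rewrite mul0r.
- by rewrite mulrC; exact: (a_x z).2.
have [-> | a_neq0] := eqVneq a 0; [by left | right].
have ay0 : a * y = 0 by exact: prime_ann_mul_eq0 zy_neq0.
by split=> //; case: (ann_eq0_leaf_classes a_neq0 ay0) => // /(not_y a az0).
Qed.

Lemma zero_divisor_leaf_classes (v : R) : nz_zero_divisor v ->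
  [\/ ann_equiv v y, ann_equiv v x | v * y != 0].
Proof.
move=> [v_neq0 _]; have [vy0 | ] := eqVneq (v * y) 0; last by constructor 3.
by case: (ann_eq0_leaf_classes v_neq0 vy0); [constructor 1 | constructor 2].
Qed.

Lemma ann_equiv_outside_prime_ann (u v : R) :
  nz_zero_divisor u -> nz_zero_divisor v -> u * y != 0 -> v * y != 0 ->
  ann_equiv u v.
Proof.
move=> u_zd v_zd uy_neq0 vy_neq0 a; rewrite /ann.
by rewrite (ann_outside_prime_ann u_zd uy_neq0) (ann_outside_prime_ann v_zd vy_neq0).
Qed.

End PrimeAnnihilator.

Theorem proposition3p2 (R : comPzRingType) :
  noetherian R ->
  GammaE_more_than_three_vertices R ->
  forall y : R, prime_ideal (ann y) -> ~ GammaE_leaf y.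
Proof.
move=> _ [x1 [x2 [x3 [x4 [zero_divisors distinct]]]]] y ann_y_prime [x [_ leaf]].
apply: (not_four_pairwise_unrelated
          (e := @ann_equiv R) (P := @nz_zero_divisor R)
          (A := fun v => ann_equiv v y) (B := fun v => ann_equiv v x)
          (C := fun v => nz_zero_divisor v /\ v * y != 0)) zero_divisors distinct.
- move=> v v_zd.
  case: (zero_divisor_leaf_classes ann_y_prime leaf v_zd) => [? | ? | ?].
  + exact: Or31.
  + exact: Or32.
  + exact: Or33.
- exact: ann_equiv_to.
- exact: ann_equiv_to.
- move=> u v [u_zd uy_neq0] [v_zd vy_neq0].
  exact: (ann_equiv_outside_prime_ann ann_y_prime leaf u_zd v_zd uy_neq0 vy_neq0).
Qed.
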